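(* Let $G$ be a graph on $n$ vertices. Then $\mathcal{Z}^{\mathrm{TE}}_-(G)\cong K_n$ if and only if $\mathrm{Z}_-(G)=1$ and every singleton subset of $V(G)$ is a skew forcing set of $G$.
   Context: Skew forcing: vertices are colored blue or white; if any vertex $u$ (blue or white) has exactly one white neighbor $v$, then $u$ may force $v$ to become blue. A skew forcing set is a (possibly empty) set of initially blue vertices from which repeated application of this rule turns every vertex blue; $\mathrm{Z}_-(G)$ is the minimum size of a skew forcing set. $\mathcal{Z}^{\mathrm{TE}}_-(G)$ has as vertices the minimum skew forcing sets of $G$, with $S_1S_2$ an edge iff $S_1\setminus S_2=\{v_1\}$ and $S_2\setminus S_1=\{v_2\}$ for some vertices $v_1,v_2$. *)

From mathcomp Require Import all_boot.
Set Implicit Arguments. Unset Strict Implicit. Unset Printing Implicit Defensive.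

Section Skew.
Variables (T : finType) (e : rel T).

Definition simple_graph := symmetric e /\ irreflexive e.

Definition nbhd (u : T) : {set T} := [set w | e u w].

(* [skew_derivable B C]: starting from blue set B, the blue set C can be reached
   by repeated application of the skew forcing rule: any vertex u (blue or
   white) whose set of white neighbours is exactly {v} forces v blue. *)
Inductive skew_derivable (B : {set T}) : {set T} -> Prop :=
| sd_refl : skew_derivable B B
| sd_step (C : {set T}) (u v : T) :
    skew_derivable B C -> nbhd u :\: C = [set v] -> skew_derivable B (v |: C).

Definition skew_forcing_set (S : {set T}) : Prop := skew_derivable S [set: T].

Definition skew_forcing_number_is (k : nat) : Prop :=
  (exists S, skew_forcing_set S /\ #|S| = k) /\
  (forall S, skew_forcing_set S -> k <= #|S|).

Definition min_skew_forcing_set (S : {set T}) : Prop :=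
  skew_forcing_set S /\ (forall S', skew_forcing_set S' -> #|S| <= #|S'|).

Definition TE_adj (S1 S2 : {set T}) : Prop :=
  exists v1 v2 : T, S1 :\: S2 = [set v1] /\ S2 :\: S1 = [set v2].

(* Z^TE_-(G) is isomorphic to the complete graph K_m: a bijection f from 'I_m
   onto the vertex set (minimum skew forcing sets) such that f i, f j are
   adjacent iff i <> j. *)
Definition TE_iso_complete (m : nat) : Prop :=
  exists f : 'I_m -> {set T},
    injective f /\
    (forall S, min_skew_forcing_set S <-> exists i, f i = S) /\
    (forall i j, TE_adj (f i) (f j) <-> i <> j).

End Skew.

(* The n = |V| minimum skew forcing sets realizing K_n all have the same size k
   and pairwise differ in exactly one element.  Such a family either shares a
   common (k-1)-set, which leaves room for at most n - k + 1 members, or lies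
   in a common (k+1)-set, which leaves room for at most k + 1.  If G has an edge
   uw, then V \ {u, w} is skew forcing, so k <= n - 2 and only the first case
   survives, giving k = 1; if G is edgeless, V is its only skew forcing set and
   n = 1.  With k = 1 the n minimum sets are n distinct singletons, i.e. all of
   them. *)

From mathcomp Require Import all_boot.
From mathcomp Require Import zify.
Set Implicit Arguments. Unset Strict Implicit.

Section SetFamilies.
Variable T : finType.

Lemma injective_card1_le n (F : 'I_n -> {set T}) (A : {set T}) :
  injective F -> (forall i, F i \subset A) -> (forall i, #|F i| = 1) ->
  n <= #|A|.
Proof.
move=> F_inj F_sub F_card1.
have <- : #|[set [set x] | x in A]| = #|A| by apply: card_imset; apply: set1_inj.
have <- : #|[set F i | i in [set: 'I_n]]| = n by rewrite card_imset // cardsT card_ord.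
apply/subset_leq_card/subsetP=> _ /imsetP[i _ ->].
have /eqP/cards1P[x Fi] := F_card1 i.
by apply/imsetP; exists x; rewrite // -sub1set -Fi.
Qed.

Lemma injective_card1_onto (F : 'I_#|T| -> {set T}) :
  injective F -> (forall i, #|F i| = 1) -> forall v, exists i, F i = [set v].
Proof.
move=> F_inj F_card1 v.
have im_F : [set F i | i in [set: 'I_#|T|]] = [set [set x] | x in [set: T]].
  apply/eqP; rewrite eqEcard (card_imset _ set1_inj) (card_imset _ F_inj).
  rewrite !cardsT card_ord leqnn andbT.
  apply/subsetP=> _ /imsetP[i _ ->].
  by have /eqP/cards1P[x ->] := F_card1 i; apply: imset_f.
have : [set v] \in [set F i | i in [set: 'I_#|T|]] by rewrite im_F imset_f ?inE.
by case/imsetP=> i _ Fi; exists i.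
Qed.

Lemma setI_subset_or_subset_setU (A B F : {set T}) (a : T) :
  A :\: B = [set a] -> #|A :\: F| <= 1 -> #|F :\: B| <= 1 ->
  A :&: B \subset F \/ F \subset A :|: B.
Proof.
move=> AB A_F F_B; have /setP/(_ a) := AB; rewrite !inE eqxx => /andP[aB aA].
have [IF|/subsetPn[x /setIP[xA xB] xF]] := boolP (A :&: B \subset F); [by left|right].
have aF : a \in F.
  apply: contraNT aB => aF.
  by rewrite -(card_le1_eqP A_F a x) ?inE ?aF ?aA ?xF ?xA.
apply/subsetP=> y yF; rewrite inE; apply/negPn/negP=> /norP[yA yB].
by move: yA; rewrite (card_le1_eqP F_B a y) ?inE ?aF ?aB ?yF ?yB ?aA.
Qed.

Section Uniform.
Variables (n k : nat) (f : 'I_n -> {set T}).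
Hypotheses (f_inj : injective f) (card_f : forall i, #|f i| = k).

Lemma card_setD_uniform_gt0 i j : i != j -> 0 < #|f i :\: f j|.
Proof.
move=> ij; rewrite card_gt0 setD_eq0; apply: contra ij => sub_ij.
by apply/eqP/f_inj/eqP; rewrite eqEcard sub_ij !card_f leqnn.
Qed.

Lemma uniform_card_gt0_lt (i j : 'I_n) : i != j -> 0 < k < #|T|.
Proof.
move=> ij; have ji : j != i by rewrite eq_sym.
have := card_setD_uniform_gt0 ij; have := card_setD_uniform_gt0 ji.
have := subset_leq_card (subsetDl (f i) (f j)).
have := subset_leq_card (subsetIr (f j) (~: f i)); rewrite -setDE.
by have := cardsC (f i); rewrite card_f; lia.
Qed.

Lemma star_family_bound (I : {set T}) :
  #|I|.+1 = k -> (forall i, I \subset f i) -> n + k <= #|T| + 1.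
Proof.
move=> card_I I_sub; pose F i := f i :\: I.
have F_inj : injective F.
  move=> i j Fij; apply: f_inj.
  by rewrite -(setID (f i) I) -(setID (f j) I) !(setIidPr (I_sub _)) -/(F i) Fij.
have F_card1 i : #|F i| = 1 by rewrite cardsDS // card_f -card_I subSnn.
have := injective_card1_le F_inj (fun i => setSD I (subsetT (f i))) F_card1.
by rewrite setTD; have := cardsC I; lia.
Qed.

Lemma costar_family_bound (U : {set T}) :
  #|U| = k.+1 -> (forall i, f i \subset U) -> n <= k.+1.
Proof.
move=> card_U sub_U; pose F i := U :\: f i.
have F_inj : injective F.
  move=> i j Fij; apply: f_inj.
  have UFK l : U :\: F l = f l by rewrite setDDr setDv set0U (setIidPr (sub_U l)).
  by rewrite -UFK Fij UFK.
have F_card1 i : #|F i| = 1 by rewrite cardsDS // card_f card_U subSnn.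
by rewrite -card_U; apply: injective_card1_le F_inj (fun i => subsetDl U (f i)) F_card1.
Qed.

Hypothesis card_setD_le1 : forall i j, #|f i :\: f j| <= 1.

Lemma card_setD_uniform i j : i != j -> #|f i :\: f j| = 1.
Proof. by move=> ij; apply/eqP; rewrite eqn_leq card_setD_le1 card_setD_uniform_gt0. Qed.

Lemma star_or_costar_family (i0 i1 : 'I_n) : i0 != i1 ->
  (forall i, f i0 :&: f i1 \subset f i) \/ (forall i, f i \subset f i0 :|: f i1).
Proof.
move=> i01; pose I := f i0 :&: f i1; pose U := f i0 :|: f i1.
have /eqP/cards1P[a f01] := card_setD_uniform i01.
have star_or_costar i : I \subset f i \/ f i \subset U.
  exact: setI_subset_or_subset_setU f01 (card_setD_le1 _ _) (card_setD_le1 _ _).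
have [star|/forallPn[i I_fi]] := boolP [forall i, I \subset f i].
  by left=> i; apply: (forallP star).
right=> j; have [I_fj|//] := star_or_costar j.
have [I_fi'|fi_U] := star_or_costar i; first by rewrite I_fi' in I_fi.
have [z zI zfi] := subsetPn I_fi.
apply/subsetP=> y yfj; apply: contraT => yU.
have yfi : y \notin f i by apply: contra yU; apply: (subsetP fi_U).
have yz : y = z.
  by apply: (card_le1_eqP (card_setD_le1 j i)); rewrite inE ?zfi ?yfi ?yfj ?(subsetP I_fj).
by move: yU zI; rewrite yz !inE => /norP[/negPf-> _] /andP[].
Qed.

Lemma uniform_family_bound : 1 < n -> n + k <= #|T| + 1 \/ n <= k.+1.
Proof.
move=> n_gt1; pose i0 := Ordinal (ltnW n_gt1); pose i1 := Ordinal n_gt1.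
have i01 : i0 != i1 by [].
have card_I : #|f i0 :&: f i1|.+1 = k.
  by rewrite -(card_f i0) -(cardsID (f i1) (f i0)) card_setD_uniform // addn1.
have [star|costar] := star_or_costar_family i01; [left|right].
  exact: star_family_bound card_I star.
apply: costar_family_bound costar.
by rewrite cardsU !card_f -card_I; lia.
Qed.

End Uniform.
End SetFamilies.

Section SkewForcing.
Variables (T : finType) (e : rel T).

Lemma skew_derivable_forced B C x :
  skew_derivable e B C -> x \in C -> x \in B \/ exists u, e u x.
Proof.
elim=> [|C' u v _ IH uv]; first by left.
rewrite in_setU1 => /orP[/eqP->|]; last exact: IH.
by right; exists u; have /setP/(_ v) := uv; rewrite !inE eqxx => /andP[].
Qed.

Lemma edgeless_skew_forcing_set S :
  (forall u v, ~~ e u v) -> skew_forcing_set e S -> S = [set: T].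
Proof.
move=> no_edge S_forcing; apply/setP=> x; rewrite inE.
case: (skew_derivable_forced S_forcing (in_setT x)) => // -[u].
by rewrite (negbTE (no_edge u x)).
Qed.

Lemma skew_forcing_number_min k S : skew_forcing_number_is e k ->
  min_skew_forcing_set e S <-> skew_forcing_set e S /\ #|S| = k.
Proof.
case=> [[S0 [S0_forcing card_S0]] Z_le].
split=> [[S_forcing S_min]|[S_forcing card_S]].
  by split=> //; apply/eqP; rewrite eqn_leq Z_le // -card_S0 S_min.
by split=> // S' /Z_le; rewrite card_S.
Qed.

Lemma min_skew_forcing_number S :
  min_skew_forcing_set e S -> skew_forcing_number_is e #|S|.
Proof. by case=> S_forcing S_min; split=> //; exists S. Qed.

Lemma TE_adj_set1 (a b : T) : TE_adj [set a] [set b] <-> a != b.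
Proof.
have D1 x y : x != y -> [set x] :\: [set y] = [set x].
  by move=> xy; apply/setP=> z; rewrite !inE; have [->|] := eqVneq z x; rewrite ?xy ?andbF.
split=> [[v1 [v2 [ab _]]]|ab]; last by exists a, b; rewrite !D1 // eq_sym.
by apply/eqP=> ab'; move: ab; rewrite ab' setDv => /setP/(_ v1); rewrite !inE eqxx.
Qed.

Hypotheses (e_sym : symmetric e) (e_irr : irreflexive e).

Lemma skew_forcing_setC_edge u w : e u w -> skew_forcing_set e (~: [set u; w]).
Proof.
move=> euw; have uw : u != w by apply: contraTneq euw => ->; rewrite e_irr.
have force_w : nbhd e u :\: ~: [set u; w] = [set w].
  apply/setP=> x; rewrite !inE negbK.
  have [->|xw] := eqVneq x w; first by rewrite euw orbT.
  by rewrite orbF; have [->|] := eqVneq x u; rewrite ?e_irr.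
have force_u : nbhd e w :\: (w |: ~: [set u; w]) = [set u].
  apply/setP=> x; rewrite !inE.
  have [->|xu] := eqVneq x u; first by rewrite (negbTE uw) /= e_sym.
  by have [->|] := eqVneq x w; rewrite ?e_irr /= ?orbT ?andbF.
rewrite /skew_forcing_set; have -> : [set: T] = u |: (w |: ~: [set u; w]).
  by apply/setP=> x; rewrite !inE; case: (x == u); case: (x == w).
by apply: sd_step force_u; apply: sd_step force_w; apply: sd_refl.
Qed.

Lemma min_skew_forcing_family_card1 (f : 'I_#|T| -> {set T}) :
  injective f -> (forall i, min_skew_forcing_set e (f i)) ->
  (forall i j, #|f i :\: f j| <= 1) -> forall i, #|f i| = 1.
Proof.
move=> f_inj f_min f_D i0.
have card_f i : #|f i| = #|f i0|.
  by have [] := (skew_forcing_number_min _ (min_skew_forcing_number (f_min i0))).1 (f_min i).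
have card_lt (n_gt1 : 1 < #|T|) : 0 < #|f i0| < #|T|.
  have ij : Ordinal (ltnW n_gt1) != Ordinal n_gt1 :> 'I_#|T| by [].
  exact: uniform_card_gt0_lt f_inj card_f _ _ ij.
have [/existsP[u /existsP[w euw]]|no_edge] := boolP [exists u, exists w, e u w].
  have uw : u != w by apply: contraTneq euw => ->; rewrite e_irr.
  have k_le : #|f i0| + 2 <= #|T|.
    have := (f_min i0).2 _ (skew_forcing_setC_edge euw).
    by have := cardsC [set u; w]; rewrite cards2 uw; lia.
  have n_gt1 : 1 < #|T| by lia.
  have := card_lt n_gt1; have := uniform_family_bound f_inj card_f f_D n_gt1.
  by lia.
have f_T : f i0 = [set: T].
  apply: edgeless_skew_forcing_set (f_min i0).1 => u w.
  by apply: contra no_edge => euw; apply/existsP; exists u; apply/existsP; exists w.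
have := ltn_ord i0.
by case: (ltnP 1 #|T|) => [/card_lt|]; rewrite f_T cardsT; lia.
Qed.

End SkewForcing.

Theorem proposition5p12 (T : finType) (e : rel T) :
  simple_graph e ->
  (TE_iso_complete e #|T| <->
   (skew_forcing_number_is e 1 /\ forall v : T, skew_forcing_set e [set v])).
Proof.
move=> [e_sym e_irr]; split.
- case=> f [f_inj [f_min f_adj]].
  have min_f i : min_skew_forcing_set e (f i) by apply/f_min; exists i.
  have f_D i j : #|f i :\: f j| <= 1.
    have [-> | ij] := eqVneq i j; first by rewrite setDv cards0.
    by have [v1 [v2 [-> _]]] := (f_adj i j).2 (elimN eqP ij); rewrite cards1.
  have card_f := min_skew_forcing_family_card1 e_sym e_irr f_inj min_f f_D.
  have [i0 _] : exists i0 : 'I_#|T|, true.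
    (* when V is empty, V is itself a minimum skew forcing set, hence some f i *)
    have [T0|T_gt0] := posnP #|T|; last by exists (Ordinal T_gt0).
    have [|i _] := (f_min [set: T]).1; last by exists i.
    by split=> [|S _]; [apply: sd_refl | rewrite cardsT T0].
  have Z1 : skew_forcing_number_is e 1.
    by rewrite -(card_f i0); apply: min_skew_forcing_number.
  split=> // v; have [i <-] := injective_card1_onto f_inj card_f v.
  exact: (min_f i).1.
- case=> Z1 forcing1; exists (fun i => [set enum_val i]); split; [|split].
  + by move=> i j /set1_inj/enum_val_inj.
  + move=> S; rewrite (skew_forcing_number_min _ Z1).
    split=> [[_ /eqP/cards1P[v ->]]|[i <-]].
      by exists (enum_rank v); rewrite enum_rankK.
    by split; [apply: forcing1 | rewrite cards1].
  + move=> i j; split=> [/TE_adj_set1/eqP vij ij|/eqP ij]; first by apply: vij; rewrite ij.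
    by apply/TE_adj_set1; rewrite (inj_eq enum_val_inj).
Qed.
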